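(* Let $d\geq 2$ and $1\leq d_1<d$ be integers, let $\mathbb{T}$ be the rooted $d$-ary tree and $\tilde{\mathbb{T}}$ its left-most $d_1$-regular subtree with the same root. Assign potential $u\in\mathbb{R}$ to every vertex of $\tilde{\mathbb{T}}$ other than the root and potential $0$ to every vertex of $\mathbb{T}\setminus\tilde{\mathbb{T}}$. For $\beta\geq 0$ let \[Z^{Det}_n(\beta,u)=\sum_{W}\exp\Big(\beta \sum_{y\in W\setminus\{\mathbf 0\}} U(y)\Big),\] where the sum is over all directed paths $W$ from the root $\mathbf 0$ to a vertex of generation $n$, and $U(y)$ is the potential of $y$. Then for any $\beta\geq 0$ and $u\in\mathbb{R}$, the limit $f^{Det}(\beta,u):=\lim_{n\to\infty}\frac1n\log Z^{Det}_n(\beta,u)$ exists and \[ f^{Det}(\beta,u)=\max\{\beta u+\log d_1,\ \log d\},\] and hence the critical curve $u^{Det}_c(\beta):=\inf\{u\in\mathbb{R}: f^{Det}(\beta,u)>\log d\}$ equals \[ u^{Det}_c(\beta)=\frac{\log(d/d_1)}{\beta}.\]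
   Context: The nodes of the rooted $d$-ary tree $\mathbb{T}$ are labeled $(k,j)$, $k\geq 0$ the generation and $1\leq j\leq d^k$; the root is $\mathbf 0=(0,1)$, and the offspring of $(k,j)$ are $(k+1,(j-1)d+\ell)$, $1\leq \ell\leq d$. The left-most $d_1$-regular subtree $\tilde{\mathbb{T}}$ contains the root, and for each $x=(k,j)\in\tilde{\mathbb{T}}$ its children in $\tilde{\mathbb{T}}$ are $(k+1,d(j-1)+\ell)$ for $1\leq \ell\leq d_1$. A directed path from the root to generation $n$ is a sequence $\mathbf 0=w(0),w(1),\dots,w(n)$ with each $w(m+1)$ a child of $w(m)$. *)

From Stdlib Require Import Reals List Arith Lia.
From Coquelicot Require Import Coquelicot.
Import ListNotations.
Open Scope R_scope.

(* Nodes of the rooted d-ary tree: (k, j), k the generation, 1 <= j <= d^k. *)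
Definition node := (nat * nat)%type.
Definition root : node := (0%nat, 1%nat).

Definition children (d : nat) (x : node) : list node :=
  map (fun l => (S (fst x), ((snd x - 1) * d + l)%nat)) (seq 1 d).

Fixpoint paths (d : nat) (n : nat) : list (list node) :=
  match n with
  | O => [[root]]
  | S n' => flat_map (fun p => map (fun c => p ++ [c]) (children d (last p root)))
                     (paths d n')
  end.

(* Membership in the left-most d1-regular subtree: the root is in it, and
   (k+1, d(j-1)+l) is in it iff (k,j) is in it and 1 <= l <= d1. *)
Fixpoint inTt (d d1 : nat) (k j : nat) : bool :=
  match k with
  | O => Nat.eqb j 1
  | S k' => andb (inTt d d1 k' ((j - 1) / d + 1))
                 (Nat.leb ((j - 1) mod d + 1) d1)
  end.

Definition U (d d1 : nat) (u : R) (y : node) : R :=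
  if Nat.eqb (fst y) 0 then 0
  else if inTt d d1 (fst y) (snd y) then u else 0.

Definition sumR (l : list R) : R := fold_right Rplus 0 l.

Definition ZDet (d d1 : nat) (beta u : R) (n : nat) : R :=
  sumR (map (fun W => exp (beta * sumR (map (U d d1 u) (tl W)))) (paths d n)).

Definition fDet (d d1 : nat) (beta u : R) : R :=
  real (Lim_seq (fun n => ln (ZDet d d1 beta u n) / INR n)).

Definition ucDet (d d1 : nat) (beta : R) : Rbar :=
  Glb_Rbar (fun u => fDet d d1 beta u > ln (INR d)).

(* Split Z_n according to whether the endpoint of the path lies in the subtree.
   Paths ending in the subtree stay in it, so they contribute exactly
   a^n with a = d1 e^(beta u); the remaining part B_n obeys
   B_(n+1) = d B_n + (d - d1) a^n, since every child of a vertex outside the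
   subtree is outside it.  Hence M^n <= d Z_n <= d (n + 1) M^n with
   M = max(a, d), so (1/n) log Z_n -> log M = max(beta u + log d1, log d),
   and f > log d exactly when beta u > log(d/d1). *)

From Stdlib Require Import Reals List Lia Lra.
From Coquelicot Require Import Coquelicot.
Import ListNotations.
Open Scope R_scope.

Lemma sumR_app (l1 l2 : list R) : sumR (l1 ++ l2) = sumR l1 + sumR l2.
Proof. induction l1 as [|x l1 IH]; simpl; [lra|]. rewrite IH; lra. Qed.

Lemma sumR_map_const {A} (g : A -> R) (s : list A) (c : R) :
  (forall x, In x s -> g x = c) -> sumR (map g s) = INR (length s) * c.
Proof.
  induction s as [|x s IH]; intros Hg; [simpl; lra|].
  change (sumR (map g (x :: s))) with (g x + sumR (map g s)).
  rewrite length_cons, S_INR, Hg by (left; reflexivity).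
  rewrite IH by (intros; apply Hg; right; assumption). lra.
Qed.

Lemma sumR_map_scal {A} (g : A -> R) (s : list A) (c : R) :
  sumR (map (fun x => c * g x) s) = c * sumR (map g s).
Proof. induction s as [|x s IH]; simpl; [lra|]. rewrite IH; lra. Qed.

Lemma sumR_map_ext_in {A} (f g : A -> R) (s : list A) :
  (forall x, In x s -> f x = g x) -> sumR (map f s) = sumR (map g s).
Proof. intros H; f_equal; apply map_ext_in; exact H. Qed.

(* Labels are decoded with truncated subtraction [j - 1], so the child
   formulas below only hold for labels j >= 1, which all path endpoints have. *)
Lemma paths_last_label_pos d n p :
  In p (paths d n) -> p <> [] /\ (1 <= snd (last p root))%nat.
Proof.
  revert p; induction n as [|n IH]; intros p Hp; simpl in Hp.
  - destruct Hp as [<-|[]]. split; [discriminate|simpl; lia].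
  - apply in_flat_map in Hp as [q [_ Hp]].
    apply in_map_iff in Hp as [c [<- Hc]].
    apply in_map_iff in Hc as [l [<- Hl]]. apply in_seq in Hl.
    split; [destruct q; discriminate|].
    rewrite last_last. simpl. nia.
Qed.

Lemma inTt_child d d1 k j l : (0 < d)%nat -> (1 <= j)%nat -> (1 <= l <= d)%nat ->
  inTt d d1 (S k) ((j - 1) * d + l) = andb (inTt d d1 k j) (Nat.leb l d1).
Proof.
  intros Hd Hj Hl. simpl.
  replace ((j - 1) * d + l - 1)%nat with ((l - 1) + (j - 1) * d)%nat by nia.
  rewrite Nat.div_add, Nat.Div0.mod_add by lia.
  rewrite Nat.div_small, Nat.mod_small by lia.
  replace (0 + (j - 1) + 1)%nat with j by lia.
  replace (l - 1 + 1)%nat with l by lia. reflexivity.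
Qed.

Lemma U_child d d1 u k j l : (0 < d)%nat -> (1 <= j)%nat -> (1 <= l <= d)%nat ->
  U d d1 u (S k, (j - 1) * d + l)%nat = if andb (inTt d d1 k j) (Nat.leb l d1) then u else 0.
Proof. intros. unfold U. simpl fst; simpl snd. rewrite inTt_child by auto. reflexivity. Qed.

Lemma sum_children_split d d1 (F : node -> R) (x : node) (A B : R) :
  (d1 <= d)%nat ->
  (forall l, (1 <= l <= d)%nat ->
     F (S (fst x), (snd x - 1) * d + l)%nat = if Nat.leb l d1 then A else B) ->
  sumR (map F (children d x)) = INR d1 * A + INR (d - d1) * B.
Proof.
  intros Hd1 HF. unfold children. rewrite map_map.
  replace (seq 1 d) with (seq 1 d1 ++ seq (1 + d1) (d - d1)) by (rewrite <- seq_app; f_equal; lia).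
  rewrite map_app, sumR_app, (sumR_map_const _ _ A), (sumR_map_const _ _ B), !length_seq;
    [reflexivity| |]; intros l Hl; apply in_seq in Hl; rewrite HF by lia;
    destruct (Nat.leb_spec l d1); lia || reflexivity.
Qed.

Section TransferOperator.

Variables (d d1 : nat) (beta u : R).

Definition weight (p : list node) : R := exp (beta * sumR (map (U d d1 u) (tl p))).

Definition end_sum (n : nat) (f : node -> R) : R :=
  sumR (map (fun p => weight p * f (last p root)) (paths d n)).

Definition transfer (f : node -> R) (x : node) : R :=
  sumR (map (fun c => exp (beta * U d d1 u c) * f c) (children d x)).

Lemma weight_snoc p c : p <> [] -> weight (p ++ [c]) = weight p * exp (beta * U d d1 u c).
Proof.
  intros Hp. destruct p as [|x p]; [congruence|]. unfold weight. simpl.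
  rewrite map_app, sumR_app, <- exp_plus. simpl. f_equal. lra.
Qed.

Lemma end_sum_S n f : end_sum (S n) f = end_sum n (transfer f).
Proof.
  unfold end_sum, transfer. simpl.
  assert (Hpaths := paths_last_label_pos d n).
  induction (paths d n) as [|p P IH]; simpl; [reflexivity|].
  rewrite map_app, sumR_app, IH by (intros; apply Hpaths; right; auto).
  f_equal. rewrite map_map, <- sumR_map_scal. apply sumR_map_ext_in.
  intros c _. rewrite last_last, weight_snoc by (apply Hpaths; left; auto). lra.
Qed.

Lemma end_sum_ext n f g :
  (forall x, (1 <= snd x)%nat -> f x = g x) -> end_sum n f = end_sum n g.
Proof.
  intros Hfg. apply sumR_map_ext_in. intros p Hp.
  rewrite Hfg; [reflexivity|apply (paths_last_label_pos d n p Hp)].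
Qed.

Lemma end_sum_lin n a f c g :
  end_sum n (fun x => a * f x + c * g x) = a * end_sum n f + c * end_sum n g.
Proof.
  unfold end_sum. induction (paths d n) as [|p P IH]; simpl; [lra|]. rewrite IH. ring.
Qed.

Lemma end_sum_nonneg n f : (forall x, 0 <= f x) -> 0 <= end_sum n f.
Proof.
  intros Hf. unfold end_sum. induction (paths d n) as [|p P IH]; simpl; [lra|].
  apply Rplus_le_le_0_compat; [apply Rmult_le_pos; [apply Rlt_le, exp_pos|apply Hf]|exact IH].
Qed.

Definition in_subtree (x : node) : R := if inTt d d1 (fst x) (snd x) then 1 else 0.
Definition off_subtree (x : node) : R := if inTt d d1 (fst x) (snd x) then 0 else 1.

Lemma ZDet_end_sum n : ZDet d d1 beta u n = end_sum n in_subtree + end_sum n off_subtree.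
Proof.
  unfold ZDet, end_sum. induction (paths d n) as [|p P IH]; simpl; [lra|].
  rewrite IH. unfold weight, in_subtree, off_subtree. destruct inTt; ring.
Qed.

Hypotheses (d_pos : (0 < d)%nat) (d1_le_d : (d1 <= d)%nat).

Lemma transfer_in_subtree x : (1 <= snd x)%nat ->
  transfer in_subtree x = INR d1 * exp (beta * u) * in_subtree x.
Proof.
  intros Hx. destruct x as [k j]. simpl in Hx. unfold transfer.
  rewrite (sum_children_split d d1 _ (k, j) (in_subtree (k, j) * exp (beta * u)) 0 d1_le_d).
  - ring.
  - intros l Hl. unfold in_subtree. simpl fst; simpl snd.
    rewrite U_child, inTt_child by assumption.
    destruct (inTt d d1 k j), (Nat.leb l d1); simpl; rewrite ?Rmult_0_r, ?exp_0; ring.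
Qed.

Lemma transfer_off_subtree x : (1 <= snd x)%nat ->
  transfer off_subtree x = INR d * off_subtree x + INR (d - d1) * in_subtree x.
Proof.
  intros Hx. destruct x as [k j]. simpl in Hx. unfold transfer.
  rewrite (sum_children_split d d1 _ (k, j) (off_subtree (k, j)) 1 d1_le_d).
  - unfold off_subtree, in_subtree. simpl. rewrite minus_INR by exact d1_le_d.
    destruct (inTt d d1 k j); ring.
  - intros l Hl. unfold off_subtree. simpl fst; simpl snd.
    rewrite U_child, inTt_child by assumption.
    destruct (inTt d d1 k j), (Nat.leb l d1); simpl; rewrite ?Rmult_0_r, ?exp_0; ring.
Qed.

Lemma end_sum_in_subtree n : end_sum n in_subtree = (INR d1 * exp (beta * u)) ^ n.
Proof.
  induction n as [|n IH].
  - unfold end_sum, weight, in_subtree. simpl. rewrite Rmult_0_r, exp_0. ring.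
  - rewrite end_sum_S, (end_sum_ext _ _ (fun x => INR d1 * exp (beta * u) * in_subtree x + 0 * in_subtree x)),
      end_sum_lin, IH by (intros; rewrite transfer_in_subtree by auto; ring).
    simpl. ring.
Qed.

Lemma end_sum_off_subtree_S n :
  end_sum (S n) off_subtree = INR d * end_sum n off_subtree + INR (d - d1) * end_sum n in_subtree.
Proof.
  rewrite end_sum_S, <- end_sum_lin. apply end_sum_ext. intros. apply transfer_off_subtree; auto.
Qed.

End TransferOperator.

Section Growth.

Variables (d d1 : nat) (beta u : R).
Hypotheses (d1_pos : (1 <= d1)%nat) (d1_lt_d : (d1 < d)%nat).

Let a := INR d1 * exp (beta * u).
Let M := Rmax a (INR d).

Let d_pos : (0 < d)%nat. Proof. lia. Qed.
Let d1_le_d : (d1 <= d)%nat. Proof. lia. Qed.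
Let a_pos : 0 < a. Proof. apply Rmult_lt_0_compat; [apply lt_0_INR; lia|apply exp_pos]. Qed.
Let d_ge_1 : 1 <= INR d. Proof. apply (le_INR 1). lia. Qed.
Let d_sub_d1_ge_1 : 1 <= INR (d - d1). Proof. apply (le_INR 1). lia. Qed.

Let in_sum n : end_sum d d1 beta u n (in_subtree d d1) = a ^ n.
Proof. apply end_sum_in_subtree; assumption. Qed.

Let off_sum_S n : end_sum d d1 beta u (S n) (off_subtree d d1) =
  INR d * end_sum d d1 beta u n (off_subtree d d1) + INR (d - d1) * a ^ n.
Proof. rewrite end_sum_off_subtree_S, in_sum by assumption. reflexivity. Qed.

Let off_sum_nonneg n : 0 <= end_sum d d1 beta u n (off_subtree d d1).
Proof. apply end_sum_nonneg. intros x. unfold off_subtree. destruct inTt; lra. Qed.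

Lemma off_subtree_sum_lower n : INR d ^ n <= end_sum d d1 beta u (S n) (off_subtree d d1).
Proof.
  induction n as [|n IH]; rewrite off_sum_S.
  - pose proof (off_sum_nonneg 0). simpl. nra.
  - pose proof (pow_lt a (S n) a_pos). simpl pow in *. nra.
Qed.

Lemma off_subtree_sum_upper n : end_sum d d1 beta u n (off_subtree d d1) <= INR n * M ^ n.
Proof.
  assert (HaM : a <= M) by apply Rmax_l. assert (HdM : INR d <= M) by apply Rmax_r.
  assert (Hd1M : INR (d - d1) <= M) by (apply (Rle_trans _ (INR d)); [apply le_INR; lia|exact HdM]).
  induction n as [|n IH].
  - unfold end_sum, off_subtree. simpl. lra.
  - rewrite off_sum_S, S_INR. simpl pow.
    assert (a ^ n <= M ^ n) by (apply pow_incr; lra).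
    pose proof (pow_lt a n a_pos). pose proof (pos_INR n). pose proof (off_sum_nonneg n).
    nra.
Qed.

Lemma ZDet_lower n : M ^ n <= INR d * ZDet d d1 beta u n.
Proof.
  rewrite ZDet_end_sum, in_sum. pose proof (pow_lt a n a_pos).
  unfold M. apply Rmax_case.
  - pose proof (off_sum_nonneg n). nra.
  - destruct n as [|n].
    + pose proof (off_sum_nonneg 0). simpl in *. nra.
    + pose proof (off_subtree_sum_lower n). simpl pow in *. nra.
Qed.

Lemma ZDet_upper n : ZDet d d1 beta u n <= (INR n + 1) * M ^ n.
Proof.
  rewrite ZDet_end_sum, in_sum. pose proof (off_subtree_sum_upper n).
  assert (a ^ n <= M ^ n) by (apply pow_incr; split; [lra|apply Rmax_l]).
  lra.
Qed.

End Growth.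

Lemma is_lim_seq_div_INR (c : R) : is_lim_seq (fun n => c / INR n) 0.
Proof.
  pose proof (is_lim_seq_scal_l _ c _ (is_lim_seq_inv _ _ is_lim_seq_INR ltac:(discriminate))) as H.
  simpl in H. rewrite Rmult_0_r in H. exact H.
Qed.

Lemma is_lim_seq_ln_INR_div : is_lim_seq (fun n => ln (INR n) / INR n) 0.
Proof.
  apply (is_lim_comp_seq (fun y => ln y / y) INR p_infty 0 is_lim_div_ln_p).
  - exists 0%nat. discriminate.
  - exact is_lim_seq_INR.
Qed.

Lemma is_lim_seq_ln_div_of_pow_bounds (M C : R) (z : nat -> R) :
  0 < M -> 0 < C ->
  (forall n, M ^ n <= C * z n) -> (forall n, z n <= (INR n + 1) * M ^ n) ->
  is_lim_seq (fun n => ln (z n) / INR n) (ln M).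
Proof.
  intros HM HC Hlow Hup.
  apply (is_lim_seq_le_le_loc (fun n => ln M - ln C / INR n) _
           (fun n => ln M + (ln 2 / INR n + ln (INR n) / INR n))).
  - exists 1%nat. intros n Hn.
    assert (Hn1 : 1 <= INR n) by (apply (le_INR 1); exact Hn).
    assert (HMn : 0 < M ^ n) by (apply pow_lt; exact HM).
    assert (Hz : 0 < z n) by (specialize (Hlow n); nra).
    assert (Hdiv : forall x, x / INR n * INR n = x) by (intros; field; lra).
    split; apply (Rmult_le_reg_r (INR n)); try lra.
    + rewrite Rmult_minus_distr_r, !Hdiv.
      pose proof (ln_le _ _ (pow_lt _ n HM) (Hlow n)) as Hl.
      rewrite ln_pow, ln_mult in Hl by lra. lra.
    + rewrite !Rmult_plus_distr_r, !Hdiv.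
      pose proof (ln_le _ _ Hz (Hup n)) as Hu.
      rewrite ln_mult, ln_pow in Hu by lra.
      pose proof (ln_le (INR n + 1) (2 * INR n) ltac:(lra) ltac:(lra)) as Hn2.
      rewrite ln_mult in Hn2 by lra. lra.
  - pose proof (is_lim_seq_minus' _ _ _ _ (is_lim_seq_const (ln M)) (is_lim_seq_div_INR (ln C))) as H.
    rewrite Rminus_0_r in H. exact H.
  - pose proof (is_lim_seq_plus' _ _ _ _ (is_lim_seq_const (ln M))
       (is_lim_seq_plus' _ _ _ _ (is_lim_seq_div_INR (ln 2)) is_lim_seq_ln_INR_div)) as H.
    rewrite !Rplus_0_r in H. exact H.
Qed.

Lemma ln_Rmax x y : 0 < x -> 0 < y -> ln (Rmax x y) = Rmax (ln x) (ln y).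
Proof.
  intros Hx Hy. unfold Rmax.
  destruct (Rle_dec x y) as [Hxy|Hxy], (Rle_dec (ln x) (ln y)) as [Hl|Hl]; auto.
  - exfalso. apply Hl, ln_le; assumption.
  - exfalso. assert (ln y < ln x) by (apply ln_increasing; lra). lra.
Qed.

Lemma is_lim_seq_ZDet d d1 beta u : (1 <= d1)%nat -> (d1 < d)%nat ->
  is_lim_seq (fun n => ln (ZDet d d1 beta u n) / INR n)
             (Rmax (beta * u + ln (INR d1)) (ln (INR d))).
Proof.
  intros Hd1 Hdd.
  assert (Hd1p : 0 < INR d1) by (apply lt_0_INR; lia).
  assert (Hdp : 0 < INR d) by (apply lt_0_INR; lia).
  assert (Ha : 0 < INR d1 * exp (beta * u)) by (pose proof (exp_pos (beta * u)); nra).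
  replace (Rmax (beta * u + ln (INR d1)) (ln (INR d)))
    with (ln (Rmax (INR d1 * exp (beta * u)) (INR d)))
    by (rewrite ln_Rmax, ln_mult, ln_exp, Rplus_comm by (auto || apply exp_pos); reflexivity).
  apply (is_lim_seq_ln_div_of_pow_bounds _ (INR d)).
  - apply (Rlt_le_trans _ _ _ Hdp), Rmax_r.
  - exact Hdp.
  - apply ZDet_lower; assumption.
  - apply ZDet_upper; assumption.
Qed.

Lemma fDet_gt_ln_d d d1 beta u : (1 <= d1)%nat -> (d1 < d)%nat ->
  fDet d d1 beta u > ln (INR d) <-> beta * u > ln (INR d / INR d1).
Proof.
  intros Hd1 Hdd.
  assert (Hd1p : 0 < INR d1) by (apply lt_0_INR; lia).
  assert (Hdp : 0 < INR d) by (apply lt_0_INR; lia).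
  unfold fDet. rewrite (is_lim_seq_unique _ _ (is_lim_seq_ZDet d d1 beta u Hd1 Hdd)).
  simpl. rewrite ln_div by assumption.
  unfold Rmax. destruct Rle_dec; split; intros; lra.
Qed.

Lemma Glb_Rbar_gt (c : R) : Glb_Rbar (fun x => x > c) = Finite c.
Proof.
  apply is_glb_Rbar_unique. split.
  - intros x Hx. simpl. lra.
  - intros [b| |] Hb; simpl; auto.
    + destruct (Rle_dec b c) as [|Hbc]; [assumption|].
      specialize (Hb ((b + c) / 2) ltac:(lra)). simpl in Hb. lra.
    + exact (Hb (c + 1) ltac:(lra)).
Qed.

Lemma Glb_Rbar_empty : Glb_Rbar (fun _ => False) = p_infty.
Proof.
  apply is_glb_Rbar_unique. split.
  - intros x [].
  - intros [b| |] Hb; simpl; auto.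
Qed.

Theorem theorem1p1 (d d1 : nat) :
  (2 <= d)%nat -> (1 <= d1)%nat -> (d1 < d)%nat ->
  (forall beta u : R, 0 <= beta ->
     is_lim_seq (fun n => ln (ZDet d d1 beta u n) / INR n)
                (Rmax (beta * u + ln (INR d1)) (ln (INR d))))
  /\ (forall beta : R, 0 < beta ->
        ucDet d d1 beta = Finite (ln (INR d / INR d1) / beta))
  /\ ucDet d d1 0 = p_infty.
Proof.
  intros _ Hd1 Hdd. unfold ucDet.
  split; [|split].
  - intros beta u _. apply is_lim_seq_ZDet; assumption.
  - intros beta Hb. rewrite <- Glb_Rbar_gt. apply Glb_Rbar_eqset. intros u.
    rewrite fDet_gt_ln_d by assumption.
    unfold Rgt. rewrite Rlt_div_l, Rmult_comm by exact Hb. reflexivity.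
  - rewrite <- Glb_Rbar_empty. apply Glb_Rbar_eqset. intros u.
    assert (ln (INR d1) < ln (INR d)) by (apply ln_increasing; [apply lt_0_INR|apply lt_INR]; lia).
    rewrite fDet_gt_ln_d, Rmult_0_l, ln_div by (assumption || apply lt_0_INR; lia).
    split; [lra|intros []].
Qed.
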